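(* Let $m\ge 2$ be an integer and let $\gamma\neq 0$, $u\neq 0$ be real numbers. For $\kappa=k_x+ik_y\in\mathbb C$ (identified with $(k_x,k_y)\in\mathbb R^2$), let $\hat H(\kappa,\gamma,u)$ be the $2m\times 2m$ Hermitian matrix described in the context, and for real $k$ write $\hat H(k,\gamma,u)$ for this matrix at $\kappa=k$ (i.e. $k_x=k$, $k_y=0$). Let $\kappa=ke^{i\theta}$ with $k\ge 0$, $\theta\in[0,2\pi)$. Then $$U^*(\theta)\,\hat H(\kappa,\gamma,u)\,U(\theta)=\hat H(k,\gamma,u),\qquad G_1\,\hat H(k,\gamma,u)\,G_1=\hat H(k,\gamma,-u),$$ $$G_1\Gamma_3\big(-\hat H(k,\gamma,u)\big)\Gamma_3G_1=\hat H(k,\gamma,u),\qquad \Gamma_3\,\hat H(k,\gamma,u)\,\Gamma_3=\hat H(-k,-\gamma,u),$$ where the last three identities hold for all real $k$.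
   Context: Let $\sigma_1=\begin{pmatrix}0&1\\1&0\end{pmatrix}$, $\sigma_3=\begin{pmatrix}1&0\\0&-1\end{pmatrix}$, $A=\begin{pmatrix}0&0\\1&0\end{pmatrix}$. For $1\le j\le m$ set $u_j=\frac{u}{m-1}\big(j-\frac{m+1}{2}\big)$. The matrix $\hat H(\kappa,\gamma,u)$ is the $2m\times 2m$ matrix written in $m\times m$ blocks of size $2\times 2$: the $j$-th diagonal block is $u_jI_2+\begin{pmatrix}0&\bar\kappa\\ \kappa&0\end{pmatrix}$ (i.e. $u_jI_2+k_x\sigma_1+k_y\sigma_2$), the block in position $(j,j+1)$ is $\gamma A$, the block in position $(j+1,j)$ is $\gamma A^*$ ($1\le j\le m-1$), and all other blocks vanish. (This is the Fourier symbol of an effective Dirac model of $m$-layer rhombohedral graphene with valley index $+1$, unit Fermi velocity and AB stacking.) $U(\theta)$ is the diagonal unitary matrix $\mathrm{Diag}(1,e^{i\theta},e^{i\theta},e^{2i\theta},e^{2i\theta},\ldots,e^{i(m-1)\theta},e^{i(m-1)\theta},e^{im\theta})$ (diagonal exponents $0,1,1,2,2,\ldots,m-1,m-1,m$). $\Gamma_3$ is the $2m\times2m$ block-diagonal matrix with all diagonal blocks equal to $\sigma_3$, and $G_1$ is the $2m\times 2m$ block matrix with $\sigma_1$ in each block-antidiagonal position $(j,m+1-j)$, $1\le j\le m$, and zero blocks elsewhere. *)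

From HB Require Import structures.
From mathcomp Require Import all_boot all_order all_algebra.
From mathcomp Require Import reals trigo.
From mathcomp Require Import complex.
Set Implicit Arguments. Unset Strict Implicit. Unset Printing Implicit Defensive.
Import Order.TTheory GRing.Theory Num.Theory.
Local Open Scope ring_scope.

Section Model.
Variable R : realType.

Definition rc (x : R) : R[i] := Complex x 0.

Definition expi (theta : R) : R[i] := Complex (cos theta) (sin theta).

Definition adjmx n (A : 'M[R[i]]_n) : 'M[R[i]]_n := (map_mx Num.conj A)^T.

(* Indices i : 'I_(2*m) are 0-based; block index i %/ 2 (0-based, so the
   paper's block j corresponds to i %/ 2 = j - 1), position in block i %% 2. *)

(* u_j = u/(m-1) (j - (m+1)/2), with j = b + 1 for the 0-based block b *)
Definition ulayer (m : nat) (u : R) (b : nat) : R :=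
  u / (m%:R - 1) * ((b%:R + 1) - (m%:R + 1) / 2).

Definition Hhat (m : nat) (kappa : R[i]) (g u : R) : 'M[R[i]]_(2 * m) :=
  \matrix_(i, j)
    let bi := (i %/ 2)%N in let bj := (j %/ 2)%N in
    let si := (i %% 2)%N in let sj := (j %% 2)%N in
    if bi == bj then
      (if si == sj then rc (ulayer m u bi)
       else if si == 0%N then Num.conj kappa else kappa)
    else if bj == bi.+1 then
      (* block (b, b+1) = gamma A, A = [[0,0],[1,0]] *)
      (if (si == 1%N) && (sj == 0%N) then rc g else 0)
    else if bi == bj.+1 then
      (* block (b+1, b) = gamma A^*, A^* = [[0,1],[0,0]] *)
      (if (si == 0%N) && (sj == 1%N) then rc g else 0)
    else 0.

(* U(theta) = Diag(1, e^{i th}, e^{i th}, ..., e^{i(m-1)th}, e^{i(m-1)th}, e^{i m th});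
   the exponent of entry i (0-based) is (i+1)/2 *)
Definition Umx (m : nat) (theta : R) : 'M[R[i]]_(2 * m) :=
  \matrix_(i, j) if i == j then expi theta ^+ ((i.+1) %/ 2) else 0.

(* Gamma_3 = block diagonal with sigma_3 blocks *)
Definition Gamma3 (m : nat) : 'M[R[i]]_(2 * m) :=
  \matrix_(i, j) if i == j then (if (i %% 2 == 0)%N then 1 else -1) else 0.

(* G_1 = sigma_1 in each block-antidiagonal position (j, m+1-j) *)
Definition G1 (m : nat) : 'M[R[i]]_(2 * m) :=
  \matrix_(i, j)
    if ((j %/ 2)%N == (m.-1 - i %/ 2)%N) && ((i %% 2)%N != (j %% 2)%N) then 1 else 0.

End Model.

From HB Require Import structures.
From mathcomp Require Import all_boot all_order all_algebra.
From mathcomp Require Import reals trigo.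
From mathcomp Require Import complex.
From mathcomp Require Import zify ring.
Import Order.TTheory GRing.Theory Num.Theory.
Local Open Scope ring_scope.

(* All four identities are checked entrywise.  [U(theta)] is a diagonal gauge
   whose exponent (i+1)/2 rises by one across each intralayer [kappa] entry and
   is constant across each interlayer [gamma] entry, so conjugating by it strips
   the phase of [kappa].  [G1] reverses the index order: it swaps the two
   sublattices and the layers j <-> m+1-j, and u_(m+1-j) = -u_j.  [Gamma3] is
   diag((-1)^i), which negates exactly the entries with i+j odd, i.e. the
   [kappa] and [gamma] entries.  The chiral identity is the composite of the
   last two with H(kappa, gamma, u) |-> -H = H(-kappa, -gamma, -u). *)

Lemma diag_mx_if (V : nmodType) n (f : 'I_n -> V) :
  \matrix_(i, j) (if i == j then f i else 0) = diag_mx (\row_i f i).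
Proof. by apply/matrixP => i j; rewrite !mxE; case: eqP => [->|]. Qed.

Definition rev_mx (V : pzSemiRingType) n : 'M[V]_n :=
  \matrix_(i, j) (j == rev_ord i)%:R.

Lemma mul_rev_mxE (V : pzSemiRingType) n (A : 'M[V]_n) i j :
  (rev_mx V n *m A) i j = A (rev_ord i) j.
Proof.
rewrite !mxE (bigD1 (rev_ord i)) //= big1 ?addr0 => [|k /negPf hk].
  by rewrite mxE eqxx mul1r.
by rewrite mxE hk mul0r.
Qed.

Lemma mul_mx_revE (V : pzSemiRingType) n (A : 'M[V]_n) i j :
  (A *m rev_mx V n) i j = A i (rev_ord j).
Proof.
rewrite !mxE (bigD1 (rev_ord j)) //= big1 ?addr0 => [|k hk].
  by rewrite mxE rev_ordK eqxx mulr1.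
by rewrite mxE eq_sym (canF_eq rev_ordK) (negPf hk) mulr0.
Qed.

Lemma rev_ord_div2 m (i : 'I_(2 * m)) : (rev_ord i %/ 2 = m.-1 - i %/ 2)%N.
Proof. have := ltn_ord i; rewrite /=; lia. Qed.

Lemma rev_ord_mod2 m (i : 'I_(2 * m)) : (rev_ord i %% 2 = 1 - i %% 2)%N.
Proof. have := ltn_ord i; rewrite /=; lia. Qed.

Section HamiltonianSymmetries.
Variable R : realType.
Implicit Types (k g u t : R) (e : R[i]).

Lemma rcN k : rc (- k) = - rc k.
Proof. by apply/eqP; rewrite eq_complex /= oppr0 !eqxx. Qed.

Lemma conj_rc k : Num.conj (rc k) = rc k.
Proof. by apply/eqP; rewrite eq_complex /= oppr0 !eqxx. Qed.

Lemma conj_expi_mul t : Num.conj (expi t) * expi t = 1.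
Proof.
apply/eqP; rewrite eq_complex /= -(cos2Dsin2 t).
by apply/andP; split; apply/eqP; ring.
Qed.

Lemma adjmx_diag n (d : 'rV[R[i]]_n) : adjmx (diag_mx d) = diag_mx (map_mx Num.conj d).
Proof. by rewrite /adjmx map_diag_mx tr_diag_mx. Qed.

Lemma Umx_diag m t : Umx m t = diag_mx (\row_i expi t ^+ (i.+1 %/ 2)).
Proof. exact: diag_mx_if. Qed.

Lemma Gamma3_diag m : Gamma3 R m = diag_mx (\row_i (-1) ^+ i).
Proof.
apply/matrixP => i j; rewrite !mxE; case: eqP => [->|_]; rewrite ?mulr1n //.
by rewrite modn2 -signr_odd; case: odd.
Qed.

Lemma G1_rev_mx m : G1 R m = rev_mx _ (2 * m).
Proof.
apply/matrixP => i j; rewrite !mxE.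
have hi := ltn_ord i; have hj := ltn_ord j.
have -> : ((j %/ 2)%N == (m.-1 - i %/ 2)%N) && ((i %% 2)%N != (j %% 2)%N)
          = (j == rev_ord i) by apply/idP/idP; rewrite -(inj_eq val_inj) /=; lia.
by case: (j == rev_ord i).
Qed.

Lemma ulayerN m u b : ulayer m (- u) b = - ulayer m u b.
Proof. by rewrite /ulayer !mulNr. Qed.

Lemma ulayer_rev m u b : (b < m)%N -> ulayer m u (m.-1 - b) = ulayer m (- u) b.
Proof.
case: m => [|n] hb //=; rewrite /ulayer natrB; last by lia.
rewrite -[(n.+1)%:R]natr1 !addrK !mulNr -mulrN; congr (_ * _).
by field.
Qed.

Lemma HhatN m (kappa : R[i]) g u :
  Hhat m (- kappa) (- g) (- u) = - Hhat m kappa g u.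
Proof.
apply/matrixP => i j; rewrite !mxE /= ulayerN !rcN rmorphN /=.
by do ![case: ifP => _]; rewrite ?oppr0.
Qed.

Lemma Hhat_phaseE m k g u e (i j : 'I_(2 * m)) : Num.conj e * e = 1 ->
  Num.conj e ^+ (i.+1 %/ 2) * Hhat m (rc k * e) g u i j * e ^+ (j.+1 %/ 2)
  = Hhat m (rc k) g u i j.
Proof.
rewrite !mxE rmorphM /= conj_rc.
move: (Num.conj e) => c ce.
have phase n x : c ^+ n * x * e ^+ n = x.
  by rewrite mulrAC -exprMn ce expr1n mul1r.
have phase_up n x : c ^+ n.+1 * (x * e) * e ^+ n = x.
  by rewrite mulrA -mulrA -exprS phase.
have phase_down n x : c ^+ n * (x * c) * e ^+ n.+1 = x.
  by rewrite (mulrC x) mulrA -exprSr phase.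
have -> : (i.+1 %/ 2 = i %/ 2 + i %% 2)%N by lia.
have -> : (j.+1 %/ 2 = j %/ 2 + j %% 2)%N by lia.
have : (i %% 2 < 2)%N by lia.
have : (j %% 2 < 2)%N by lia.
move: (i %/ 2)%N (j %/ 2)%N (i %% 2)%N (j %% 2)%N => bi bj si sj.
case: sj => [|[|sj]] // _; case: si => [|[|si]] // _ /=; rewrite ?addn0 ?addn1.
all: do ![case: eqP => [?|?] //=]; subst.
all: by rewrite ?mulr0 ?mul0r ?phase ?phase_up ?phase_down.
Qed.

Lemma Hhat_revE m k g u (i j : 'I_(2 * m)) :
  Hhat m (rc k) g u (rev_ord i) (rev_ord j) = Hhat m (rc k) g (- u) i j.
Proof.
rewrite !mxE /= !rev_ord_div2 !rev_ord_mod2.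
have hi := ltn_ord i; have hj := ltn_ord j.
have : (i %/ 2 < m)%N by lia.
have : (j %/ 2 < m)%N by lia.
have : (i %% 2 < 2)%N by lia.
have : (j %% 2 < 2)%N by lia.
move: (i %/ 2)%N (j %/ 2)%N (i %% 2)%N (j %% 2)%N => bi bj si sj.
case: sj => [|[|sj]] // _; case: si => [|[|si]] // _ hbj hbi.
all: have E1 : ((m.-1 - bi) == (m.-1 - bj))%N = (bi == bj)
       by apply/idP/idP => /eqP ?; apply/eqP; lia.
all: have E2 : ((m.-1 - bj) == (m.-1 - bi).+1)%N = (bi == bj.+1)
       by apply/idP/idP => /eqP ?; apply/eqP; lia.
all: have E3 : ((m.-1 - bi) == (m.-1 - bj).+1)%N = (bj == bi.+1)
       by apply/idP/idP => /eqP ?; apply/eqP; lia.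
all: rewrite E1 E2 E3 ?ulayer_rev ?conj_rc //.
all: by do ![case: eqP => ? //=]; exfalso; lia.
Qed.

Lemma Hhat_signE m k g u (i j : 'I_(2 * m)) :
  (-1) ^+ i * Hhat m (rc k) g u i j * (-1) ^+ j = Hhat m (rc (- k)) (- g) u i j.
Proof.
rewrite -[(-1) ^+ i]signr_odd -[(-1) ^+ j]signr_odd -!modn2 !mxE /=.
have : (i %% 2 < 2)%N by lia.
have : (j %% 2 < 2)%N by lia.
move: (i %/ 2)%N (j %/ 2)%N (i %% 2)%N (j %% 2)%N => bi bj si sj.
case: sj => [|[|sj]] // _; case: si => [|[|si]] // _ /=; rewrite ?conj_rc ?rcN.
all: by do ![case: eqP => ? //=]; rewrite ?mul1r ?mulr1 ?mulN1r ?mulrN1 ?opprK ?oppr0.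
Qed.

Lemma Hhat_Umx_conj m k g u t :
  adjmx (Umx m t) *m Hhat m (rc k * expi t) g u *m Umx m t = Hhat m (rc k) g u.
Proof.
rewrite Umx_diag adjmx_diag mul_diag_mx mul_mx_diag.
apply/matrixP => i j; rewrite -(Hhat_phaseE _ _ _ _ _ i j (conj_expi_mul t)).
by rewrite !mxE rmorphXn.
Qed.

Lemma Hhat_G1_conj m k g u :
  G1 R m *m Hhat m (rc k) g u *m G1 R m = Hhat m (rc k) g (- u).
Proof.
by apply/matrixP => i j; rewrite G1_rev_mx mul_mx_revE mul_rev_mxE Hhat_revE.
Qed.

Lemma Hhat_Gamma3_conj m k g u :
  Gamma3 R m *m Hhat m (rc k) g u *m Gamma3 R m = Hhat m (rc (- k)) (- g) u.
Proof.
rewrite Gamma3_diag mul_diag_mx mul_mx_diag.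
by apply/matrixP => i j; rewrite -Hhat_signE !mxE.
Qed.

End HamiltonianSymmetries.

Theorem proposition2p1 (R : realType) (m : nat) (gamma u : R) :
  (2 <= m)%N -> gamma != 0 -> u != 0 ->
  (forall (k theta : R), 0 <= k -> 0 <= theta < 2 * pi ->
     adjmx (Umx m theta) *m Hhat m (rc k * expi theta) gamma u *m Umx m theta
       = Hhat m (rc k) gamma u)
  /\ (forall k : R,
     [/\ G1 R m *m Hhat m (rc k) gamma u *m G1 R m = Hhat m (rc k) gamma (- u),
         G1 R m *m Gamma3 R m *m (- Hhat m (rc k) gamma u) *m Gamma3 R m *m G1 R m
           = Hhat m (rc k) gamma u
       & Gamma3 R m *m Hhat m (rc k) gamma u *m Gamma3 R m
           = Hhat m (rc (- k)) (- gamma) u]).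
Proof.
move=> _ _ _; split=> [k theta _ _ | k]; first exact: Hhat_Umx_conj.
split; [exact: Hhat_G1_conj | | exact: Hhat_Gamma3_conj].
rewrite -HhatN -rcN -!mulmxA (mulmxA (Gamma3 R m)) (mulmxA _ (Gamma3 R m)).
by rewrite mulmxA Hhat_Gamma3_conj !opprK Hhat_G1_conj opprK.
Qed.
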